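(* Let $\pi$ be a matching of size $n$. For every integer $p$ with $1\le p\le n-1$ we have $m^{(A)}_p(\pi)=m^{(B)}_p(\pi)$.
   Context: A matching of size $n$ is a set of $n$ disjoint pairs (arches) partitioning $\{1,\dots,2n\}$ which is noncrossing: there are no two arches $\{i<j\}$, $\{k<l\}$ with $i<k<j<l$. Encode $\pi$ by the increasing sequence $a_1<\dots<a_n$ of the smaller elements of its arches (positions of opening parentheses); one has $a_i\le 2i-1$. The Young diagram $Y(\pi)$ is the diagram whose rows, from top to bottom, have lengths $a_n-n\ge a_{n-1}-(n-1)\ge\dots\ge a_1-1$ (row number $n+1-i$ from the top has length $a_i-i$). A box in the $x$-th row from the top and $y$-th column from the left is written $(x,y)$. Rule A: write $\widehat{x}=2n+1-x$. For $1\le p\le n-1$, let $\mathcal{A}^L_p(\pi)$ be the set of arches $\{a_1<a_2\}$ of $\pi$ with $a_1\le p$ and $p<a_2<\widehat p$, and $\mathcal{A}^R_p(\pi)$ the set of arches $\{a_1<a_2\}$ with $p<a_1<\widehat p$ and $\widehat p\le a_2$. Then $|\mathcal{A}^L_p(\pi)|+|\mathcal{A}^R_p(\pi)|$ is even and $m^{(A)}_p(\pi):=\tfrac12(|\mathcal{A}^L_p(\pi)|+|\mathcal{A}^R_p(\pi)|)$. Rule B: label the box $(x,y)$ of $Y(\pi)$ by $n+1-x-y$. The rim of a nonempty Young diagram is the set of its boxes $(x,y)$ such that $(x+1,y+1)$ is not in the diagram; removing the rim leaves a Young diagram, and iterating gives the rim decomposition $R_1,\dots,R_s$ of $Y(\pi)$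 (each $R_\ell$ is the rim of the diagram remaining after removing $R_1,\dots,R_{\ell-1}$). For a rim $R_\ell$, let $i$ be the label of its bottom-left box (the box of $R_\ell$ in its leftmost column), $j$ the label of its top-right box (the box of $R_\ell$ in its topmost row), and $k$ the minimal label in $R_\ell$. Let $B_\ell$ be the multiset $\{k\}\cup\{i,i-1,\dots,k+1\}\cup\{j,j-1,\dots,k+1\}$, and $B_\pi$ the multiset union of all $B_\ell$. Then $m^{(B)}_p(\pi)$ is the multiplicity of $p$ in $B_\pi$. *)

From mathcomp Require Import all_boot.
Set Implicit Arguments.
Unset Strict Implicit.
Unset Printing Implicit Defensive.

(* An arch is a pair (a1, a2) of positions with a1 < a2.
   A matching of size n is a list of arches, partitioning {1,...,2n}
   (the multiset of all endpoints is exactly 1,...,2n), and noncrossing. *)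
Definition is_matching (n : nat) (pi : seq (nat * nat)) : Prop :=
  [/\ all (fun a => a.1 < a.2) pi,
      perm_eq (flatten [seq [:: a.1; a.2] | a <- pi]) (iota 1 (2 * n))
    & forall a b, a \in pi -> b \in pi ->
        ~~ [&& a.1 < b.1, b.1 < a.2 & a.2 < b.2]].

Definition hat (n x : nat) : nat := (2 * n).+1 - x.

Definition arches_L (n p : nat) (pi : seq (nat * nat)) : seq (nat * nat) :=
  [seq a <- pi | [&& a.1 <= p, p < a.2 & a.2 < hat n p]].
Definition arches_R (n p : nat) (pi : seq (nat * nat)) : seq (nat * nat) :=
  [seq a <- pi | [&& p < a.1, a.1 < hat n p & hat n p <= a.2]].

Definition mA (n : nat) (pi : seq (nat * nat)) (p : nat) : nat :=
  (size (arches_L n p pi) + size (arches_R n p pi))./2.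

(* openers: the increasing sequence a_1 < ... < a_n of smaller endpoints;
   a_i = opener pi i (1-indexed). *)
Definition openers (pi : seq (nat * nat)) : seq nat :=
  sort leq [seq a.1 | a <- pi].
Definition opener (pi : seq (nat * nat)) (i : nat) : nat :=
  nth 0 (openers pi) i.-1.

Definition row_len (n : nat) (pi : seq (nat * nat)) (x : nat) : nat :=
  opener pi (n.+1 - x) - (n.+1 - x).

(* The boxes (x, y) of Y(pi) (row x from the top, column y from the left). *)
Definition young (n : nat) (pi : seq (nat * nat)) : seq (nat * nat) :=
  [seq (x, y) | x <- iota 1 n, y <- iota 1 (row_len n pi x)].

Definition label (n : nat) (b : nat * nat) : nat := n.+1 - b.1 - b.2.

Definition rim (D : seq (nat * nat)) : seq (nat * nat) :=
  [seq b <- D | (b.1.+1, b.2.+1) \notin D].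
Definition rim_remove (D : seq (nat * nat)) : seq (nat * nat) :=
  [seq b <- D | (b.1.+1, b.2.+1) \in D].

Fixpoint rims_fuel (fuel : nat) (D : seq (nat * nat)) : seq (seq (nat * nat)) :=
  match fuel with
  | 0 => [::]
  | f.+1 => if D is [::] then [::] else rim D :: rims_fuel f (rim_remove D)
  end.
Definition rim_decomposition (D : seq (nat * nat)) : seq (seq (nat * nat)) :=
  rims_fuel (size D) D.

Definition seq_min (s : seq nat) : nat := foldr minn (head 0 s) s.
Definition seq_max (s : seq nat) : nat := foldr maxn 0 s.

Definition bottom_left (R : seq (nat * nat)) : nat * nat :=
  let c := seq_min [seq b.2 | b <- R] in
  (seq_max [seq b.1 | b <- R & b.2 == c], c).
Definition top_right (R : seq (nat * nat)) : nat * nat :=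
  let r := seq_min [seq b.1 | b <- R] in
  (r, seq_max [seq b.2 | b <- R & b.1 == r]).

Definition rim_multiset (n : nat) (R : seq (nat * nat)) : seq nat :=
  let i := label n (bottom_left R) in
  let j := label n (top_right R) in
  let k := seq_min [seq label n b | b <- R] in
  k :: iota k.+1 (i - k) ++ iota k.+1 (j - k).

Definition B_multiset (n : nat) (pi : seq (nat * nat)) : seq nat :=
  flatten [seq rim_multiset n R | R <- rim_decomposition (young n pi)].

Definition mB (n : nat) (pi : seq (nat * nat)) (p : nat) : nat :=
  count_mem p (B_multiset n pi).

(* Read the matching as a Dyck path: the height h t, the number of arches a with
   a.1 <= t < a.2, equals 2 #{openers <= t} - t.  The arches of A^L_p and A^R_p are
   those covering p, resp. 2n - p, but not both, and by noncrossing the arches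
   covering both are exactly as many as the minimum m of h on [p, 2n - p]; hence
   m^A_p = ((h p - m) + (h (2n - p) - m)) / 2.  Since the openers are a_i = i + (row
   n+1-i of Y(pi)), the path is determined by the row lengths.  Removing the rim of
   the diagram raises h by 2 on the open interval (i, 2n - j), where i and j are the
   labels of the rim's bottom-left and top-right boxes, and leaves it unchanged
   elsewhere; a case analysis on where p and 2n - p fall shows that this lowers the
   Rule A count at p by exactly the multiplicity of p in B_l.
   Induction along the rim decomposition gives the theorem. *)

From mathcomp Require Import all_boot zify.

Set Implicit Arguments.
Unset Strict Implicit.
Unset Printing Implicit Defensive.

Lemma count_iota_leq t N : count (fun v => v <= t) (iota 1 N) = minn t N.
Proof.
elim: N => [|N IH]; first by rewrite minn0.
by rewrite -[N.+1]addn1 iotaD count_cat IH /=; lia.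
Qed.

Lemma count_disjoint_in (T : eqType) (P Q R : pred T) (s : seq T) :
  {in s, forall x, P x = Q x || R x} -> {in s, forall x, ~~ (Q x && R x)} ->
  count P s = count Q s + count R s.
Proof.
move=> PQR QR; rewrite -count_predUI (@eq_in_count _ (predI Q R) pred0) ?count_pred0.
  by rewrite addn0; apply: eq_in_count.
by move=> x /QR /negbTE.
Qed.

Lemma sub_in_count (T : eqType) (P Q : pred T) (s : seq T) :
  {in s, forall x, P x -> Q x} -> count P s <= count Q s.
Proof.
elim: s => //= x s IH PQ; apply: leq_add.
  by case Px: (P x); rewrite // (PQ x (mem_head _ _) Px).
by apply: IH => y sy; apply: PQ; rewrite inE sy orbT.
Qed.

Lemma sub_in_count_lt (T : eqType) (P Q : pred T) (s : seq T) x :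
  {in s, forall y, P y -> Q y} -> x \in s -> Q x -> ~~ P x -> count P s < count Q s.
Proof.
move=> PQ sx Qx Px; rewrite !(permP (perm_to_rem sx)) /= Qx (negbTE Px) ltnS.
by apply: sub_in_count => y /mem_rem; apply: PQ.
Qed.

Lemma exists_boundary (P : pred nat) a b :
  a <= b -> P a -> ~~ P b -> exists2 x, a <= x < b & P x && ~~ P x.+1.
Proof.
elim: b => [|b IH] ab Pa nPb.
  by move: ab; rewrite leqn0 => /eqP a0; rewrite -a0 Pa in nPb.
have {}ab : a <= b by move: ab; rewrite leq_eqVlt => /predU1P [ab|//]; rewrite -ab Pa in nPb.
case Pb: (P b); first by exists b; rewrite ?Pb ?(negbTE nPb) ?ab ?ltnSn.
by have [x xb Px] := IH ab Pa (negbT Pb); exists x => //; lia.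
Qed.

Lemma foldr_minn_le z (s : seq nat) x : x \in s -> foldr minn z s <= x.
Proof.
by elim: s => //= y s IH; rewrite inE geq_min => /predU1P [->|/IH ->]; rewrite ?leqnn ?orbT.
Qed.

Lemma foldr_minn_mem z (s : seq nat) : foldr minn z s \in z :: s.
Proof.
elim: s => [|y s IH] /=; first exact: mem_head.
rewrite /minn; case: ltnP => _; first by rewrite !inE eqxx orbT.
by move: IH; rewrite !inE => /predU1P [->|->]; rewrite ?eqxx ?orbT.
Qed.

Lemma seq_min_le (s : seq nat) x : x \in s -> seq_min s <= x.
Proof. exact: foldr_minn_le. Qed.

Lemma seq_min_mem (s : seq nat) : s != [::] -> seq_min s \in s.
Proof.
case: s => // y s _; move: (foldr_minn_mem y (y :: s)); rewrite /seq_min /= inE.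
by move=> /predU1P [->|//]; apply: mem_head.
Qed.

Lemma seq_minP (s : seq nat) v : v \in s -> (forall y, y \in s -> v <= y) -> seq_min s = v.
Proof.
move=> sv min_v; apply/eqP; rewrite eqn_leq seq_min_le //= min_v //.
by apply: seq_min_mem; case: s sv {min_v}.
Qed.

Lemma seq_max_ge (s : seq nat) x : x \in s -> x <= seq_max s.
Proof.
by elim: s => //= y s IH; rewrite inE leq_max => /predU1P [->|/IH ->]; rewrite ?leqnn ?orbT.
Qed.

Lemma seq_max_mem (s : seq nat) : s != [::] -> seq_max s \in s.
Proof.
elim: s => //= y [|z s] IH _; first by rewrite maxn0 mem_head.
rewrite inE /maxn; case: ltnP => _; last by rewrite eqxx.
by rewrite IH ?orbT.
Qed.

Lemma seq_maxP (s : seq nat) v : v \in s -> (forall y, y \in s -> y <= v) -> seq_max s = v.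
Proof.
move=> sv max_v; apply/eqP; rewrite eqn_leq seq_max_ge // andbT max_v //.
by apply: seq_max_mem; case: s sv {max_v}.
Qed.

Lemma exists_argmax (g : nat -> nat) r :
  0 < r -> exists2 x0, 0 < x0 <= r & forall x, 0 < x <= r -> g x <= g x0.
Proof.
move=> r_gt0; have /mapP [x0 x0r gx0] : seq_max [seq g x | x <- iota 1 r] \in map g (iota 1 r).
  by apply: seq_max_mem; rewrite -size_eq0 size_map size_iota; lia.
exists x0; first by move: x0r; rewrite mem_iota; lia.
by move=> x xr; rewrite -gx0 seq_max_ge // map_f // mem_iota; lia.
Qed.

Definition min_on (g : nat -> nat) a b := seq_min [seq g t | t <- index_iota a b.+1].

Lemma min_on_le g a b t : a <= t <= b -> min_on g a b <= g t.
Proof. by move=> abt; rewrite seq_min_le // map_f // mem_index_iota; lia. Qed.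

Lemma min_onP g a b : a <= b -> exists2 t, a <= t <= b & g t = min_on g a b.
Proof.
move=> ab; have /mapP [t] : min_on g a b \in [seq g t | t <- index_iota a b.+1].
  by apply: seq_min_mem; rewrite -size_eq0 size_map size_iota; lia.
by rewrite mem_index_iota => abt ->; exists t => //; lia.
Qed.

(** * Diagrams given by their row lengths *)

Record staircase_shape (n : nat) (f : nat -> nat) : Prop := StaircaseShape {
  shape_nonincr : forall x, 0 < x -> f x.+1 <= f x;
  shape_staircase : forall x, f x <= n - x }.

Definition diagram (n : nat) (f : nat -> nat) : seq (nat * nat) :=
  [seq (x, y) | x <- iota 1 n, y <- iota 1 (f x)].

Definition rim_shift (f : nat -> nat) (x : nat) : nat := f x.+1 - 1.

Lemma mem_diagram n f x y : ((x, y) \in diagram n f) = (0 < x <= n) && (0 < y <= f x).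
Proof.
apply/allpairsPdep/andP => [[x' [y' [+ + [-> ->]]]]|[xn yf]]; rewrite ?mem_iota; first lia.
by exists x, y; rewrite !mem_iota; split => //; lia.
Qed.

Lemma size_rim_remove (D : seq (nat * nat)) : rim D != [::] -> size (rim_remove D) < size D.
Proof.
move=> rim_ne; have : 0 < size (rim D) by case: (rim D) rim_ne.
have : size (rim D) + size (rim_remove D) = size D.
  rewrite /rim /rim_remove !size_filter addnC.
  by rewrite -(count_predC [pred b : nat * nat | (b.1.+1, b.2.+1) \in D]).
lia.
Qed.

(* For the rows f of Y(pi), [row_opener n f x] is the opener a_(n+1-x); so
   [height n f t] is the number of arches covering t, and [mA_path] is Rule A read
   off this path. *)
Definition row_opener (n : nat) (f : nat -> nat) (x : nat) : nat := n.+1 - x + f x.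
Definition opened (n : nat) (f : nat -> nat) (t : nat) : nat :=
  count (fun x => row_opener n f x <= t) (iota 1 n).
Definition height (n : nat) (f : nat -> nat) (t : nat) : nat := opened n f t * 2 - t.
Definition min_height (n : nat) (f : nat -> nat) (p : nat) : nat :=
  min_on (height n f) p (2 * n - p).
Definition mA_path (n : nat) (f : nat -> nat) (p : nat) : nat :=
  ((height n f p - min_height n f p) + (height n f (2 * n - p) - min_height n f p))./2.

Lemma min_height_le n f p t : p <= t <= 2 * n - p -> min_height n f p <= height n f t.
Proof. exact: min_on_le. Qed.

Lemma min_heightP n f p :
  p <= 2 * n - p -> exists2 t, p <= t <= 2 * n - p & height n f t = min_height n f p.
Proof. exact: min_onP. Qed.

Lemma opened_eq n f t y : y <= n ->
  (forall x, 0 < x <= n -> (t < row_opener n f x) = (x <= y)) -> opened n f t = n - y.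
Proof.
move=> yn threshold; rewrite /opened (@eq_in_count _ _ (predC (fun x => x <= y))).
  have := count_predC (fun x => x <= y) (iota 1 n).
  by rewrite count_iota_leq size_iota; set c := count _ _; lia.
by move=> x; rewrite mem_iota => xn /=; rewrite -threshold; lia.
Qed.

Lemma height_low n f t : t <= n -> (forall x, n - t < x -> f x = 0) -> height n f t = t.
Proof.
move=> tn f0; rewrite /height (@opened_eq _ _ _ (n - t)); try lia.
move=> x xn; rewrite /row_opener; have [xt|xt] := leqP x (n - t); last rewrite f0 //; lia.
Qed.

Section Shape.
Variables (n : nat) (f : nat -> nat).
Hypothesis shape_f : staircase_shape n f.

Lemma shape_nonincr_le x x' : 0 < x <= x' -> f x' <= f x.
Proof.
case/andP=> x_gt0; elim: x' => [|x' IH] xx'; first lia.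
case: (eqVneq x x'.+1) => [-> //|ne_x].
by apply: leq_trans (shape_nonincr shape_f _) (IH _); lia.
Qed.

Lemma row_opener_nonincr x x' : 0 < x <= x' -> row_opener n f x' <= row_opener n f x.
Proof. by move=> xx'; have := shape_nonincr_le xx'; rewrite /row_opener; lia. Qed.

Lemma rim_shift_shape : staircase_shape n (rim_shift f).
Proof.
split=> x; rewrite /rim_shift; last by have := shape_staircase shape_f x.+1; lia.
by move=> x_gt0; have := shape_nonincr shape_f (_ : 0 < x.+1); lia.
Qed.

Lemma mem_rim_diagram x y :
  ((x, y) \in rim (diagram n f)) = [&& 0 < x <= n, 0 < y <= f x & f x.+1 <= y].
Proof. by rewrite mem_filter /= !mem_diagram; have := shape_staircase shape_f x.+1; lia. Qed.

Lemma rim_remove_diagram : rim_remove (diagram n f) = diagram n (rim_shift f).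
Proof.
rewrite /rim_remove [X in filter _ X]/diagram filter_flatten -map_comp /diagram.
congr flatten; apply/eq_in_map => x; rewrite mem_iota => xn /=.
rewrite filter_map -(@filter_iota_ltn 1 (f x) (rim_shift f x)); last first.
  by have := shape_nonincr shape_f (_ : 0 < x); rewrite /rim_shift; lia.
congr map; apply: eq_in_filter => y; rewrite mem_iota /= mem_diagram /rim_shift.
by have := shape_staircase shape_f x.+1; lia.
Qed.

Lemma height_high t : n + f 1 <= t -> height n f t = 2 * n - t.
Proof.
move=> ht; rewrite /height (@opened_eq _ _ _ 0) //; first lia.
by move=> x xn; have := row_opener_nonincr (_ : 0 < 1 <= x); rewrite /row_opener; lia.
Qed.

End Shape.

(** * Peeling off the rim *)

(* [K.+1], [i], [j] are the labels k, i, j of the rim, [m] is the minimum height on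
   [p, 2n - p] and [hp], [hq] the heights at its ends. *)
Lemma rim_step_arith (p K i j m hp hq : nat) :
  m <= hp -> m <= hq -> minn p K <= m ->
  (p <= i -> p <= j -> m = minn p K) -> ((i < p) || (j < p) -> m + 2 <= p) ->
  (p <= i -> hp = p) -> (p <= j -> hq = p) ->
  ((hp - m) + (hq - m))./2 = (K.+1 == p) + ((K.+1 < p <= i) + (K.+1 < p <= j))
    + ((hp + 2 * (i < p) - minn (m + 2) p) + (hq + 2 * (j < p) - minn (m + 2) p))./2.
Proof. by case: (leqP p i) (leqP p j); lia. Qed.

Section Rim.
Variables (n : nat) (f : nat -> nat) (r : nat).
Hypothesis shape_f : staircase_shape n f.
Hypotheses (r_gt0 : 0 < r) (fr_gt0 : 0 < f r) (fr1_eq0 : f r.+1 = 0).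

Lemma row_gt0 x : 0 < x <= r -> 0 < f x.
Proof. by move=> xr; apply: leq_trans fr_gt0 (shape_nonincr_le shape_f xr). Qed.

Lemma row_eq0 x : r < x -> f x = 0.
Proof. by move=> rx; apply/eqP; rewrite -leqn0 -fr1_eq0 (shape_nonincr_le shape_f) //; lia. Qed.

Lemma last_row_lt : r < n.
Proof. by have := shape_staircase shape_f r; lia. Qed.

Lemma bottom_left_label : label n (bottom_left (rim (diagram n f))) = n - r.
Proof.
have r1_rim : (r, 1) \in rim (diagram n f).
  by rewrite mem_rim_diagram // fr1_eq0; have := last_row_lt; lia.
rewrite /bottom_left (@seq_minP _ 1); last first.
- by move=> _ /mapP [[x y] + ->]; rewrite mem_rim_diagram //=; lia.
- by apply/mapP; exists (r, 1).
rewrite (@seq_maxP _ r) /label //=; first lia.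
- by apply/mapP; exists (r, 1); rewrite // mem_filter r1_rim.
move=> _ /mapP [[x y] + ->]; rewrite mem_filter mem_rim_diagram //=.
by case: (leqP x r) => [xr|/row_eq0 ->]; lia.
Qed.

Lemma top_right_label : label n (top_right (rim (diagram n f))) = n - f 1.
Proof.
have top_rim : (1, f 1) \in rim (diagram n f).
  rewrite mem_rim_diagram // (shape_nonincr shape_f) // andbT.
  by have := row_gt0 (x := 1); have := last_row_lt; lia.
rewrite /top_right (@seq_minP _ 1); last first.
- by move=> _ /mapP [[x y] + ->]; rewrite mem_rim_diagram //=; lia.
- by apply/mapP; exists (1, f 1).
rewrite (@seq_maxP _ (f 1)) /label //=; first lia.
- by apply/mapP; exists (1, f 1); rewrite // mem_filter top_rim.
by move=> _ /mapP [[x y] + ->]; rewrite mem_filter mem_rim_diagram //= => /andP [/eqP ->]; lia.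
Qed.

Lemma height_low_rows t : t <= n - r -> height n f t = t.
Proof.
move=> tr; have rn := last_row_lt.
by apply: height_low => [|x rx]; [lia | apply: row_eq0; lia].
Qed.

Lemma row_opener_threshold t : n - r < t < n + f 1 ->
  exists2 y, 0 < y <= r & forall x, 0 < x <= n -> (t < row_opener n f x) = (x <= y).
Proof.
move=> t_mid; have rn := last_row_lt.
have [|||y y_range /andP [ty ty1]] := @exists_boundary (fun x => t < row_opener n f x) 1 r.+1.
- lia.
- by rewrite /row_opener; lia.
- by rewrite /row_opener fr1_eq0; lia.
exists y; first lia.
move=> x xn; have [xy|yx] := leqP x y.
  by have := row_opener_nonincr shape_f (_ : 0 < x <= y); lia.
by have := row_opener_nonincr shape_f (_ : 0 < y.+1 <= x); lia.
Qed.

Lemma height_shift t : height n (rim_shift f) t = height n f t + 2 * (n - r < t < n + f 1).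
Proof.
have rn := last_row_lt; have f21 := shape_nonincr shape_f (isT : 0 < 1).
have [low|lo] := leqP t (n - r).
  rewrite height_low_rows // height_low //; [lia | lia |].
  by move=> x tx; rewrite /rim_shift row_eq0 //; lia.
have [hi|high] := ltnP t (n + f 1); last first.
  by rewrite (height_high shape_f) // (height_high (rim_shift_shape shape_f)) /rim_shift; lia.
have t_mid : n - r < t < n + f 1 by lia.
have [y y_range thr] := row_opener_threshold t_mid.
have ty : t < row_opener n f y by rewrite thr; lia.
have := shape_staircase shape_f y; rewrite /row_opener in ty => fy.
rewrite /height (@opened_eq _ f _ y) //; last lia.
rewrite (@opened_eq _ (rim_shift f) _ y.-1); [lia | lia |].
move=> x xn; rewrite /row_opener /rim_shift; have [xr|rx] := ltnP x r.
  have fx1 : 0 < f x.+1 by apply: row_gt0; lia.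
  by have := thr x.+1; rewrite /row_opener; lia.
by rewrite row_eq0; lia.
Qed.

Variable x0 : nat.
Hypotheses (x0_range : 0 < x0 <= r) (x0_max : forall x, 0 < x <= r -> x + f x <= x0 + f x0).

Lemma min_rim_label : seq_min [seq label n b | b <- rim (diagram n f)] = n.+1 - (x0 + f x0).
Proof.
apply: seq_minP.
  apply/mapP; exists (x0, f x0); last by rewrite /label /=; lia.
  rewrite mem_rim_diagram // leqnn (shape_nonincr shape_f) ?andbT; last lia.
  by have := row_gt0 x0_range; have := last_row_lt; lia.
move=> _ /mapP [[x y] + ->]; rewrite mem_rim_diagram // /label /= => xy_rim.
have xr : x <= r by case: (leqP x r) xy_rim => [//|/row_eq0 ->]; lia.
have : x + f x <= x0 + f x0 by apply: x0_max; lia.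
lia.
Qed.

Lemma height_valley : height n f (n - x0 + f x0) = n - (x0 + f x0).
Proof.
have rn := last_row_lt; have x0_le := shape_staircase shape_f x0.
rewrite /height (@opened_eq _ _ _ x0); [lia | lia |].
move=> x xn; have [xx0|x0x] := leqP x x0.
  by have := row_opener_nonincr shape_f (_ : 0 < x <= x0); rewrite /row_opener; lia.
have := shape_nonincr_le shape_f (_ : 0 < x0 <= x); rewrite /row_opener; lia.
Qed.

Lemma height_mid t : n - r < t < n + f 1 ->
  [/\ n - (x0 + f x0) <= height n f t, height n f t + 2 <= t & height n f t + t + 2 <= 2 * n].
Proof.
move=> t_mid; have rn := last_row_lt; have [y y_range thr] := row_opener_threshold t_mid.
have ty : t < row_opener n f y by rewrite thr; lia.
have ty1 : row_opener n f y.+1 <= t by rewrite leqNgt thr; lia.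
have fy1 : r <= y \/ 0 < f y.+1.
  by case: (ltnP y r) => [yr|]; [right; apply: row_gt0; lia | left].
have := shape_staircase shape_f y; have := x0_max y_range.
rewrite /height (@opened_eq _ _ _ y) // /row_opener in ty ty1 *; last lia.
by split; lia.
Qed.

Variable p : nat.
Hypothesis p_range : 0 < p < n.

Let p_le_q : p <= 2 * n - p. Proof. lia. Qed.

Lemma height_bounds t : p <= t <= 2 * n - p ->
  if n - r < t < n + f 1 then n - (x0 + f x0) <= height n f t else p <= height n f t.
Proof.
move=> t_range; case: ifP => [t_mid|t_out]; first by case: (height_mid t_mid).
have [low|lo] := leqP t (n - r); first by rewrite height_low_rows; lia.
by rewrite (height_high shape_f); lia.
Qed.

Lemma min_height_ge : minn p (n - (x0 + f x0)) <= min_height n f p.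
Proof.
have [t t_range <-] := min_heightP f p_le_q.
by have := height_bounds t_range; case: ifP; lia.
Qed.

Lemma min_height_shallow :
  p <= n - r -> p <= n - f 1 -> min_height n f p = minn p (n - (x0 + f x0)).
Proof.
move=> pr pf; apply/eqP; rewrite eqn_leq min_height_ge andbT leq_min; apply/andP; split.
  by rewrite -[X in _ <= X](height_low_rows pr) min_height_le //; lia.
have x0_le1 := shape_nonincr_le shape_f (_ : 0 < 1 <= x0).
rewrite -height_valley min_height_le //.
by have := row_gt0 x0_range; lia.
Qed.

Lemma min_height_deep : (n - r < p) || (n - f 1 < p) -> min_height n f p + 2 <= p.
Proof.
have rn := last_row_lt; case/orP=> [rp|fp].
  have p_mid : n - r < p < n + f 1 by lia.
  by have [_ hp _] := height_mid p_mid; have := @min_height_le n f p p; lia.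
have q_mid : n - r < 2 * n - p < n + f 1 by lia.
by have [_ _ hq] := height_mid q_mid; have := @min_height_le n f p (2 * n - p); lia.
Qed.

Lemma min_height_shift : min_height n (rim_shift f) p = minn (min_height n f p + 2) p.
Proof.
have rn := last_row_lt.
have [t t_range ht] := min_heightP (rim_shift f) p_le_q.
have [s s_range hs] := min_heightP f p_le_q.
have hp : if n - r < p then height n f p + 2 <= p else height n f p == p.
  case: ifP => rp; last by rewrite height_low_rows; lia.
  have p_mid : n - r < p < n + f 1 by lia.
  by case: (height_mid p_mid).
have := height_bounds t_range; have := height_bounds s_range.
have := height_shift t; have := height_shift s; have := height_shift p.
have := @min_height_le n f p t; have := @min_height_le n (rim_shift f) p p.
have := @min_height_le n (rim_shift f) p s.
by move: hp; do 3 case: ifP => ?; lia.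
Qed.

Lemma mA_path_rim :
  mA_path n f p = count_mem p (rim_multiset n (rim (diagram n f))) + mA_path n (rim_shift f) p.
Proof.
have rn := last_row_lt; have x0_le := shape_staircase shape_f x0.
have mem_range a b : (p \in iota a.+1 (b - a)) = (a < p <= b) by rewrite mem_iota; lia.
rewrite /rim_multiset bottom_left_label top_right_label min_rim_label /= count_cat.
rewrite !count_uniq_mem ?iota_uniq // !mem_range.
have -> : n.+1 - (x0 + f x0) = (n - (x0 + f x0)).+1 by lia.
rewrite /mA_path min_height_shift !height_shift.
have -> : (n - r < p < n + f 1) = (n - r < p) by lia.
have -> : (n - r < 2 * n - p < n + f 1) = (n - f 1 < p) by lia.
apply: rim_step_arith.
- by apply: min_height_le; lia.
- by apply: min_height_le; lia.
- exact: min_height_ge.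
- exact: min_height_shallow.
- exact: min_height_deep.
- exact: height_low_rows.
- by move=> pf; rewrite (height_high shape_f); lia.
Qed.

End Rim.

Lemma shape_rows_eq0 n f x : staircase_shape n f -> f 1 = 0 -> 0 < x -> f x = 0.
Proof.
by move=> shape_f f1 x_gt0; apply/eqP; rewrite -leqn0 -f1 (shape_nonincr_le shape_f); lia.
Qed.

Lemma mA_path_empty n f p : staircase_shape n f -> f 1 = 0 -> 0 < p < n -> mA_path n f p = 0.
Proof.
move=> shape_f f1 p_range.
have h_low t : t <= n -> height n f t = t.
  by move=> tn; apply: height_low => // x x_gt0; apply: (shape_rows_eq0 shape_f f1); lia.
have h_high t : n <= t -> height n f t = 2 * n - t.
  by move=> nt; rewrite (height_high shape_f) // f1 addn0.
have pq : p <= 2 * n - p by lia.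
have [t t_range ht] := min_heightP f pq.
have m_p : min_height n f p <= height n f p by apply: min_height_le; lia.
have m_ge : p <= height n f t by have [tn|nt] := leqP t n; [rewrite h_low | rewrite h_high]; lia.
rewrite /mA_path h_low ?h_high in m_p *; lia.
Qed.

Lemma diagram_nil n f : staircase_shape n f -> f 1 = 0 -> diagram n f = [::].
Proof.
move=> shape_f f1; case D: (diagram n f) => [//|[x y] D'].
have : (x, y) \in diagram n f by rewrite D mem_head.
by rewrite mem_diagram => /andP [/andP [x_gt0 _]]; rewrite (shape_rows_eq0 shape_f f1 x_gt0); lia.
Qed.

Lemma count_rims_diagram n p fuel f : 0 < p < n -> staircase_shape n f ->
  size (diagram n f) <= fuel ->
  count_mem p (flatten [seq rim_multiset n R | R <- rims_fuel fuel (diagram n f)]) = mA_path n f p.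
Proof.
move=> p_range; elim: fuel f => [|fuel IH] f shape_f size_f;
  have [f1|f1_gt0] := posnP (f 1); try by rewrite mA_path_empty // diagram_nil.
  have : (1, f 1) \in diagram n f by rewrite mem_diagram; lia.
  by move: size_f; rewrite leqn0 => /nilP ->.
have [r /andP [r_gt0 _] /andP [fr_gt0]] : exists2 r, 1 <= r < n & (0 < f r) && ~~ (0 < f r.+1).
  by apply: exists_boundary; [lia | lia | have := shape_staircase shape_f n; lia].
rewrite -eqn0Ngt => /eqP fr1.
have [x0 x0_range x0_max] := exists_argmax (fun x => x + f x) r_gt0.
have rim_ne : rim (diagram n f) != [::].
  suff : (1, f 1) \in rim (diagram n f) by case: (rim _).
  by rewrite mem_rim_diagram // (shape_nonincr shape_f) // andbT; lia.
have -> : rims_fuel fuel.+1 (diagram n f) =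
    rim (diagram n f) :: rims_fuel fuel (rim_remove (diagram n f)).
  by case: (diagram n f) rim_ne.
rewrite map_cons -[flatten (_ :: _)]/(_ ++ flatten _) count_cat rim_remove_diagram // IH.
- by rewrite (mA_path_rim shape_f r_gt0 fr_gt0 fr1 x0_range x0_max).
- exact: rim_shift_shape.
- by have := size_rim_remove rim_ne; rewrite rim_remove_diagram //; lia.
Qed.

(** * Matchings *)

Definition endpoints (pi : seq (nat * nat)) : seq nat := flatten [seq [:: a.1; a.2] | a <- pi].
Definition covers (t : nat) (a : nat * nat) : bool := a.1 <= t < a.2.
(* [row_len n pi x] does not vanish for x > n, hence the cut-off. *)
Definition matching_rows (n : nat) (pi : seq (nat * nat)) (x : nat) : nat :=
  if 0 < x <= n then row_len n pi x else 0.

Lemma count_endpoints (P : pred nat) pi :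
  count P (endpoints pi) = count (fun a => P a.1) pi + count (fun a => P a.2) pi.
Proof. by elim: pi => //= a pi IH; rewrite IH; lia. Qed.

Lemma size_endpoints pi : size (endpoints pi) = (size pi).*2.
Proof. by elim: pi => //= a pi ->; lia. Qed.

Lemma count_lt_nth (s : seq nat) i : sorted ltn s -> i < size s ->
  count (fun y => y < nth 0 s i) s = i.
Proof.
elim: s i => // a s IH i s_sorted /=.
have a_min : all (fun y => a < y) s := order_path_min ltn_trans s_sorted.
case: i => [_|i i_lt] /=.
  by rewrite ltnn (@eq_in_count _ _ pred0) ?count_pred0 // => y /(allP a_min) /=; lia.
by rewrite (allP a_min) ?mem_nth // IH ?(path_sorted s_sorted).
Qed.

Lemma uniq_openers_endpoints (pi : seq (nat * nat)) :
  uniq (endpoints pi) -> uniq [seq a.1 | a <- pi].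
Proof.
elim: pi => //= a pi IH /andP [a1_new /andP [_ uniq_pi]]; rewrite IH // andbT.
apply/mapP => -[b pb b1]; move: a1_new; rewrite inE negb_or => /andP [_ /negP]; apply.
by rewrite b1; apply/flattenP; exists [:: b.1; b.2]; rewrite ?mem_head ?map_f.
Qed.

Section Matching.
Variables (n : nat) (pi : seq (nat * nat)).
Hypothesis pi_matching : is_matching n pi.

Lemma arch_lt (a : nat * nat) : a \in pi -> a.1 < a.2.
Proof. by case: pi_matching => lt_pi _ _; apply: (allP lt_pi). Qed.

Lemma noncrossing (a b : nat * nat) :
  a \in pi -> b \in pi -> ~~ [&& a.1 < b.1, b.1 < a.2 & a.2 < b.2].
Proof. by case: pi_matching => _ _; apply. Qed.

Lemma perm_endpoints : perm_eq (endpoints pi) (iota 1 (2 * n)).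
Proof. by case: pi_matching. Qed.

Lemma size_matching : size pi = n.
Proof. by have := perm_size perm_endpoints; rewrite size_iota size_endpoints; lia. Qed.

Lemma uniq_endpoints : uniq (endpoints pi).
Proof. by rewrite (perm_uniq perm_endpoints) iota_uniq. Qed.

Lemma opener_mem_endpoints (a : nat * nat) : a \in pi -> a.1 \in endpoints pi.
Proof. by move=> pa; apply/flattenP; exists [:: a.1; a.2]; rewrite ?mem_head ?map_f. Qed.

Lemma opener_gt0 (a : nat * nat) : a \in pi -> 0 < a.1.
Proof. by move/opener_mem_endpoints; rewrite (perm_mem perm_endpoints) mem_iota; lia. Qed.

Lemma opener_neq_closer (a b : nat * nat) : a \in pi -> b \in pi -> a.1 != b.2.
Proof.
move=> pa pb; apply/eqP => ab.
have := count_uniq_mem a.1 uniq_endpoints; rewrite opener_mem_endpoints // count_endpoints /=.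
have : 0 < count (fun c : nat * nat => c.1 == a.1) pi.
  by rewrite -has_count; apply/hasP; exists a.
have : 0 < count (fun c : nat * nat => c.2 == a.1) pi.
  by rewrite -has_count; apply/hasP; exists b; rewrite ?ab.
lia.
Qed.

Lemma count_coversE t : t <= 2 * n ->
  count (covers t) pi = count (fun a => a.1 <= t) pi * 2 - t.
Proof.
move=> tn; have : count (fun a => a.1 <= t) pi = count (covers t) pi + count (fun a => a.2 <= t) pi.
  by apply: count_disjoint_in => a pa; have := arch_lt pa; rewrite /covers; lia.
have := count_endpoints (fun v => v <= t) pi.
rewrite (permP perm_endpoints) count_iota_leq; lia.
Qed.

Lemma size_openers : size (openers pi) = n.
Proof. by rewrite size_sort size_map size_matching. Qed.

Lemma perm_openers : perm_eq (openers pi) [seq a.1 | a <- pi].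
Proof. by rewrite /openers perm_sort perm_refl. Qed.

Lemma sorted_openers : sorted ltn (openers pi).
Proof.
rewrite ltn_sorted_uniq_leq sort_uniq (sort_sorted leq_total) andbT.
exact: uniq_openers_endpoints uniq_endpoints.
Qed.

Lemma opener_bounds i : i < n -> i < nth 0 (openers pi) i <= i.*2.+1.
Proof.
move=> i_lt; set v := nth 0 (openers pi) i.
have : v \in [seq a.1 | a <- pi] by rewrite -(perm_mem perm_openers) mem_nth ?size_openers.
case/mapP=> a pa v_a; have := opener_gt0 pa; rewrite -v_a => v_gt0.
have openers_below : count (fun a : nat * nat => a.1 < v) pi = i.
  rewrite -[RHS](count_lt_nth sorted_openers) ?size_openers // (permP perm_openers) count_map.
  exact: eq_count.
have closers_below : count (fun a : nat * nat => a.2 < v) pi <= i.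
  by rewrite -openers_below; apply: sub_in_count => b pb; have := arch_lt pb; lia.
have := count_endpoints (fun w => w < v) pi; rewrite (permP perm_endpoints) /=.
rewrite (@eq_count _ _ (fun w => w <= v - 1)) ?count_iota_leq; first lia.
by move=> w /=; lia.
Qed.

Lemma row_opener_matching x :
  0 < x <= n -> row_opener n (matching_rows n pi) x = nth 0 (openers pi) (n - x).
Proof.
move=> xn; have := opener_bounds (_ : n - x < n).
rewrite /row_opener /matching_rows xn /row_len /opener.
have -> : (n.+1 - x).-1 = n - x by lia.
lia.
Qed.

Lemma matching_rows_shape : staircase_shape n (matching_rows n pi).
Proof.
split=> x; last first.
  have [xn|] := boolP (0 < x <= n); last by rewrite /matching_rows => /negbTE ->.
  have := row_opener_matching xn; have := opener_bounds (_ : n - x < n).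
  by rewrite /row_opener; lia.
move=> x_gt0; have [xn|] := leqP x.+1 n; last by rewrite /matching_rows; case: ifP; lia.
have := sorted_ltn_nth ltn_trans 0 sorted_openers (n - x.+1) (n - x).
by rewrite !inE size_openers -!row_opener_matching /row_opener; lia.
Qed.

Lemma young_diagram : young n pi = diagram n (matching_rows n pi).
Proof.
congr flatten; apply/eq_in_map => x; rewrite mem_iota => xn.
by rewrite /matching_rows (_ : 0 < x <= n) //; lia.
Qed.

Lemma opened_matching t :
  opened n (matching_rows n pi) t = count (fun a : nat * nat => a.1 <= t) pi.
Proof.
have rev_openers : [seq nth 0 (openers pi) (n - x) | x <- iota 1 n] = rev (openers pi).
  apply: (@eq_from_nth _ 0); rewrite ?size_map ?size_iota ?size_rev ?size_openers // => i i_lt.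
  by rewrite nth_rev ?size_openers // (nth_map 0) ?size_iota // nth_iota // size_openers.
rewrite /opened (@eq_in_count _ _ (fun x => nth 0 (openers pi) (n - x) <= t)); last first.
  by move=> x; rewrite mem_iota => xn /=; rewrite row_opener_matching //; lia.
rewrite -(count_map (fun x => nth 0 (openers pi) (n - x)) (fun v => v <= t)) rev_openers count_rev.
by rewrite (permP perm_openers) count_map; apply: eq_count.
Qed.

Lemma height_matching t : t <= 2 * n -> height n (matching_rows n pi) t = count (covers t) pi.
Proof. by move=> tn; rewrite count_coversE // /height opened_matching. Qed.

Lemma count_covers_closer (a : nat * nat) t : a \in pi -> a.1 <= t < a.2 ->
  count (covers a.2) pi < count (covers t) pi.
Proof.
move=> pa at_; apply: (sub_in_count_lt (x := a)); rewrite // /covers; try lia.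
move=> b pb; have := noncrossing pa pb; have := opener_neq_closer pb pa; lia.
Qed.

Lemma count_covers_opener (a : nat * nat) t : a \in pi -> a.1 <= t < a.2 ->
  count (covers a.1.-1) pi < count (covers t) pi.
Proof.
move=> pa at_; have a1_gt0 := opener_gt0 pa.
apply: (sub_in_count_lt (x := a)); rewrite // /covers; try lia.
move=> b pb; have := noncrossing pb pa; have := opener_neq_closer pa pb; lia.
Qed.

Lemma count_spanning p : 0 < p < n ->
  count (fun a : nat * nat => (a.1 <= p) && (hat n p <= a.2)) pi =
  min_height n (matching_rows n pi) p.
Proof.
move=> p_range; have pq : p <= 2 * n - p by lia.
have [t t_range ht] := min_heightP (matching_rows n pi) pq.
have min_covers u : p <= u <= 2 * n - p -> count (covers t) pi <= count (covers u) pi.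
  move=> u_range; rewrite -!height_matching; try lia.
  by rewrite ht min_height_le.
rewrite -ht height_matching; last lia.
apply/eqP; rewrite eqn_leq; apply/andP; split.
  by apply: sub_in_count => a _; rewrite /covers /hat; lia.
apply: sub_in_count => a pa a_cov; apply/negPn/negP => a_short.
have := count_covers_closer pa a_cov; have := count_covers_opener pa a_cov.
have := min_covers a.2; have := min_covers a.1.-1; have := arch_lt pa.
move: a_cov a_short; rewrite /covers /hat; set a1 := a.1; set a2 := a.2; lia.
Qed.

Lemma mA_matching p : 0 < p < n -> mA n pi p = mA_path n (matching_rows n pi) p.
Proof.
move=> p_range; rewrite /mA /arches_L /arches_R !size_filter /mA_path -count_spanning //.
rewrite !height_matching; try lia.
have -> : count (covers p) pi =
    count (fun a : nat * nat => [&& a.1 <= p, p < a.2 & a.2 < hat n p]) pi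
    + count (fun a : nat * nat => (a.1 <= p) && (hat n p <= a.2)) pi.
  by apply: count_disjoint_in => a pa; have := arch_lt pa; rewrite /covers /hat; lia.
have -> : count (covers (2 * n - p)) pi =
    count (fun a : nat * nat => (a.1 <= p) && (hat n p <= a.2)) pi
    + count (fun a : nat * nat => [&& p < a.1, a.1 < hat n p & hat n p <= a.2]) pi.
  by apply: count_disjoint_in => a pa; have := arch_lt pa; rewrite /covers /hat; lia.
lia.
Qed.

End Matching.

Theorem theorem3p2 (n : nat) (pi : seq (nat * nat)) :
  is_matching n pi ->
  forall p : nat, 1 <= p <= n.-1 -> mA n pi p = mB n pi p.
Proof.
move=> pi_matching p p_range; have {}p_range : 0 < p < n by lia.
rewrite mA_matching // /mB /B_multiset /rim_decomposition young_diagram //.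
by rewrite count_rims_diagram //; apply: matching_rows_shape.
Qed.
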